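(* Let $N\ge 2$ and consider the cross gadget of size $N$ in the Clos network $C_{N,N}$, i.e. the set of flows consisting of one flow from source server $s_i^j$ (of input switch $I_i$) to destination server $t_j^i$ (of output switch $O_j$) with demand $1$, for each $i\in[N]$ and $j\in[N-1]$. Then every routing of this set with congestion $1$ satisfies: (1) for all $i\in[N]$, the $N-1$ flows leaving $I_i$ are assigned to $N-1$ different middle switches, and for all $j\in[N-1]$, the $N$ flows entering $O_j$ are assigned to $N$ different middle switches; (2) for all $i_1\neq i_2$ in $[N]$, the middle switch to which no flow leaving $I_{i_1}$ is assigned differs from the middle switch to which no flow leaving $I_{i_2}$ is assigned.
   Context: Clos network $C_{N,R}$: a directed graph with $N$ middle switches $M_1,\dots,M_N$, $R$ input switches $I_1,\dots,I_R$, $R$ output switches $O_1,\dots,O_R$, source servers $s_i^k$ attached to $I_i$ and destination servers $t_i^k$ attached to $O_i$ ($i\in[R]$, $k\in[N]$), with edges $s_i^kI_i$, $I_iM_m$, $M_mO_i$, $O_it_i^k$; all links have capacity $1$. A routing assigns each flow $f$ (from $I_{i(f)}$ to $O_{j(f)}$, demand $\mathrm{dem}(f)$) a single middle switch $r(f)\in[N]$; its congestion is $\max_{i\in[R],m\in[N]}\max\{\sum_{f:i(f)=i,r(f)=m}\mathrm{dem}(f),\ \sum_{f:j(f)=i,r(f)=m}\mathrm{dem}(f)\}$. *)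

From mathcomp Require Import all_boot.
Set Implicit Arguments. Unset Strict Implicit. Unset Printing Implicit Defensive.

(* A set of flows in the Clos network C_{N,R}: a finite type F of flows,
   each flow f has an input switch src f = I_{i(f)}, an output switch
   dst f = O_{j(f)} (both in [R]) and a demand dem f.
   A routing r assigns each flow a middle switch in [N].
   Congestion = max over switches i in [R] and middle switches m in [N] of
   the load on links I_i M_m and M_m O_i. *)
Definition congestion (F : finType) (N R : nat) (src dst : F -> 'I_R)
  (dem : F -> nat) (r : F -> 'I_N) : nat :=
  \max_(i < R) \max_(m < N)
     maxn (\sum_(f | (src f == i) && (r f == m)) dem f)
          (\sum_(f | (dst f == i) && (r f == m)) dem f).

(* Cross gadget of size N in C_{N,N}: one flow (i,j) for each i in [N],
   j in [N-1], from s_i^j (input switch I_i) to t_j^i (output switch O_j),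
   with demand 1. *)
Definition cross_flow (N : nat) := ('I_N * 'I_N.-1)%type.

Definition cross_src (N : nat) (f : cross_flow N) : 'I_N := f.1.
Definition cross_dst (N : nat) (f : cross_flow N) : 'I_N :=
  widen_ord (leq_pred N) f.2.
Definition cross_dem (N : nat) (f : cross_flow N) : nat := 1.

From mathcomp Require Import all_boot.

Set Implicit Arguments.
Unset Strict Implicit.

(* With unit demands, congestion 1 means that no two flows share an input or
   an output link, so the middle-switch assignment of the cross gadget is
   injective along every row (fixed input switch) and every column (fixed
   output switch).  A column has N flows and N middle switches, so each middle
   switch m is hit exactly once in each of the N-1 columns, by N-1 distinct
   rows; hence at most one row misses m. *)

Section Congestion.

Variables (F : finType) (N R : nat) (src dst : F -> 'I_R) (r : F -> 'I_N).

Lemma src_load_le_congestion (dem : F -> nat) (i : 'I_R) (m : 'I_N) :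
  \sum_(f | (src f == i) && (r f == m)) dem f <= congestion src dst dem r.
Proof.
apply: leq_trans (leq_bigmax i); apply: leq_trans (leq_bigmax m).
exact: leq_maxl.
Qed.

Lemma dst_load_le_congestion (dem : F -> nat) (i : 'I_R) (m : 'I_N) :
  \sum_(f | (dst f == i) && (r f == m)) dem f <= congestion src dst dem r.
Proof.
apply: leq_trans (leq_bigmax i); apply: leq_trans (leq_bigmax m).
exact: leq_maxr.
Qed.

Hypothesis congestion_le1 : congestion src dst (fun=> 1) r <= 1.

Lemma congestion_le1_src_inj (f g : F) : src f = src g -> r f = r g -> f = g.
Proof.
move=> esrc er.
have := leq_trans (src_load_le_congestion _ (src f) (r f)) congestion_le1.
rewrite sum1_card => /card_le1_eqP all_eq.
by apply/esym/all_eq; rewrite unfold_in /= ?esrc ?er !eqxx.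
Qed.

Lemma congestion_le1_dst_inj (f g : F) : dst f = dst g -> r f = r g -> f = g.
Proof.
move=> edst er.
have := leq_trans (dst_load_le_congestion _ (dst f) (r f)) congestion_le1.
rewrite sum1_card => /card_le1_eqP all_eq.
by apply/esym/all_eq; rewrite unfold_in /= ?edst ?er !eqxx.
Qed.

End Congestion.

Section LatinRectangle.

Variables (I J M : finType) (r : I * J -> M).
Hypotheses (row_inj : forall i, injective (fun j => r (i, j)))
           (col_inj : forall j, injective (fun i => r (i, j)))
           (card_IM : #|I| = #|M|).

Lemma card_rows_missing (m : M) :
  #|[set i | [forall j, r (i, j) != m]]| + #|J| <= #|I|.
Proof.
set P := [set p | r p == m].
have col_onto : [set p.2 | p in P] = setT.
  apply/setP => j; rewrite inE.
  have /codomP [i ei] := inj_card_onto (@col_inj j) (eq_leq (esym card_IM)) m.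
  by apply/imsetP; exists (i, j); rewrite // inE ei.
have card_J : #|J| <= #|P| by rewrite -cardsT -col_onto leq_imset_card.
have card_hit : #|[set p.1 | p in P]| = #|P|.
  apply: card_in_imset => -[i j] [i' j'] /[!inE] /eqP hp /eqP hq /= ei.
  by subst i'; congr (_, _); apply: (@row_inj i); rewrite /= hp hq.
have missing_sub : [set i | [forall j, r (i, j) != m]] \subset
                   ~: [set p.1 | p in P].
  apply/subsetP => i; rewrite !inE => /forallP miss.
  apply/imsetP => -[[i' j] /[!inE] /eqP hp /= ei]; subst i'.
  by move: (miss j); rewrite hp eqxx.
rewrite -(cardsC [set p.1 | p in P]) addnC card_hit.
exact: leq_add card_J (subset_leq_card missing_sub).
Qed.

Lemma rows_missing_eq (i1 i2 : I) (m : M) : #|I| = #|J|.+1 ->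
  (forall j, r (i1, j) != m) -> (forall j, r (i2, j) != m) -> i1 = i2.
Proof.
move=> card_IJ miss1 miss2.
have := card_rows_missing m; rewrite card_IJ addnC -addn1 leq_add2l.
by move=> /card_le1_eqP; apply; rewrite inE; apply/forallP.
Qed.

End LatinRectangle.

Theorem mainTheorem8 (N : nat) (hN : 2 <= N) (r : cross_flow N -> 'I_N) :
  congestion (@cross_src N) (@cross_dst N) (@cross_dem N) r = 1 ->
  ((forall i : 'I_N, injective (fun j : 'I_N.-1 => r (i, j))) /\
   (forall j : 'I_N.-1, injective (fun i : 'I_N => r (i, j)))) /\
  (forall (i1 i2 : 'I_N) (m1 m2 : 'I_N), i1 != i2 ->
     (forall j : 'I_N.-1, r (i1, j) != m1) ->
     (forall j : 'I_N.-1, r (i2, j) != m2) ->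
     m1 != m2).
Proof.
move=> /eq_leq congestion_le1.
have row_inj (i : 'I_N) : injective (fun j : 'I_N.-1 => r (i, j)).
  move=> j1 j2 e.
  by case: (congestion_le1_src_inj congestion_le1
              (f := (i, j1)) (g := (i, j2)) erefl e).
have col_inj (j : 'I_N.-1) : injective (fun i : 'I_N => r (i, j)).
  move=> i1 i2 e.
  by case: (congestion_le1_dst_inj congestion_le1
              (f := (i1, j)) (g := (i2, j)) erefl e).
split; first by [].
move=> i1 i2 m1 m2 ne12 miss1 miss2; apply: contra ne12 => /eqP em; subst m2.
apply/eqP; apply: (rows_missing_eq (r := r) row_inj col_inj _ _ miss1 miss2).
  by rewrite !card_ord.
by rewrite !card_ord prednK // ltnW.
Qed.
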